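(* Let $(\mathfrak{g},[\cdot,\cdot]_{\mathfrak{g}})$ be a Leibniz algebra, $(V;\rho^L,\rho^R)$ a representation, and $T:V\to\mathfrak{g}$ a relative Rota-Baxter operator. Then for every $n\ge1$ and every $f\in\mathrm{Hom}(\otimes^nV,\mathfrak{g})$, $\partial_Tf=(-1)^{n-1}\{T,f\}$.
   Context: A Leibniz algebra is a vector space $\mathfrak{g}$ with bilinear $[\cdot,\cdot]_{\mathfrak{g}}$ satisfying $[x,[y,z]_{\mathfrak{g}}]_{\mathfrak{g}}=[[x,y]_{\mathfrak{g}},z]_{\mathfrak{g}}+[y,[x,z]_{\mathfrak{g}}]_{\mathfrak{g}}$. A representation $(V;\rho^L,\rho^R)$: linear $\rho^L,\rho^R:\mathfrak{g}\to\mathfrak{gl}(V)$ with $\rho^L([x,y]_{\mathfrak{g}})=[\rho^L(x),\rho^L(y)]$, $\rho^R([x,y]_{\mathfrak{g}})=[\rho^L(x),\rho^R(y)]$, $\rho^R(y)\rho^L(x)=-\rho^R(y)\rho^R(x)$. A relative Rota-Baxter operator is a linear $T:V\to\mathfrak{g}$ with $[Tv_1,Tv_2]_{\mathfrak{g}}=T(\rho^L(Tv_1)v_2+\rho^R(Tv_2)v_1)$. $C^n(V,\mathfrak{g})=\mathrm{Hom}(\otimes^nV,\mathfrak{g})$, and $\partial_T:C^n\to C^{n+1}$ is $(\partial_Tf)(v_1,\dots,v_{n+1})=\sum_{i=1}^n(-1)^{i+1}[Tv_i,f(v_1,\dots,\hat v_i,\dots,v_{n+1})]_{\mathfrak{g}}-\sum_{i=1}^n(-1)^{i+1}T\rho^R(f(v_1,\dots,\hat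 v_i,\dots,v_{n+1}))v_i+(-1)^{n+1}[f(v_1,\dots,v_n),Tv_{n+1}]_{\mathfrak{g}}+(-1)^nT\rho^L(f(v_1,\dots,v_n))v_{n+1}+\sum_{1\le i<j\le n+1}(-1)^if(v_1,\dots,\hat v_i,\dots,v_{j-1},\rho^L(Tv_i)v_j+\rho^R(Tv_j)v_i,v_{j+1},\dots,v_{n+1})$. A permutation $\sigma\in\mathbb{S}_N$ is an $(i_1,\dots,i_k)$-shuffle ($i_1+\dots+i_k=N$) if it is increasing on each of the consecutive blocks of positions of sizes $i_1,\dots,i_k$; $\mathbb{S}_{(i_1,\dots,i_k)}$ is the set of these, $(-1)^\sigma$ the sign. The bracket $\{\cdot,\cdot\}$ on $\bigoplus_{n\ge1}C^n(V,\mathfrak{g})$ is defined for $g_1\in C^m$, $g_2\in C^n$ by $\{g_1,g_2\}(v_1,\dots,v_{m+n})=$ $\sum_{k=1}^m\sum_{\sigma\in\mathbb{S}_{(k-1,n)}}(-1)^{(k-1)n+1}(-1)^\sigma g_1(v_{\sigma(1)},\dots,v_{\sigma(k-1)},\rho^L(g_2(v_{\sigma(k)},\dots,v_{\sigma(k+n-1)}))v_{k+n},v_{k+n+1},\dots,v_{m+n})$ $+\sum_{k=2}^{m+1}\sum_{\sigma\in\mathbb{S}_{(k-2,n,1)},\,\sigma(k+n-2)=k+n-1}(-1)^{kn}(-1)^\sigma g_1(v_{\sigma(1)},\dots,v_{\sigma(k-2)},\rho^R(g_2(v_{\sigma(k-1)},\dots,v_{\sigma(k+n-2)}))v_{\sigma(k+n-1)},v_{k+n},\dots,v_{m+n})$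 $+\sum_{k=1}^m\sum_{\sigma\in\mathbb{S}_{(k-1,n-1)}}(-1)^{(k-1)n}(-1)^\sigma[g_2(v_{\sigma(k)},\dots,v_{\sigma(k+n-2)},v_{k+n-1}),g_1(v_{\sigma(1)},\dots,v_{\sigma(k-1)},v_{k+n},\dots,v_{m+n})]_{\mathfrak{g}}$ $+\sum_{\sigma\in\mathbb{S}_{(m,n-1)}}(-1)^{mn+1}(-1)^\sigma[g_1(v_{\sigma(1)},\dots,v_{\sigma(m)}),g_2(v_{\sigma(m+1)},\dots,v_{\sigma(m+n-1)},v_{m+n})]_{\mathfrak{g}}$ $+\sum_{k=1}^n\sum_{\sigma\in\mathbb{S}_{(k-1,m)}}(-1)^{m(k+n-1)}(-1)^\sigma g_2(v_{\sigma(1)},\dots,v_{\sigma(k-1)},\rho^L(g_1(v_{\sigma(k)},\dots,v_{\sigma(k+m-1)}))v_{k+m},v_{k+m+1},\dots,v_{m+n})$ $+\sum_{k=1}^n\sum_{\sigma\in\mathbb{S}_{(k-1,m,1)},\,\sigma(k+m-1)=k+m}(-1)^{m(k+n-1)+1}(-1)^\sigma g_2(v_{\sigma(1)},\dots,v_{\sigma(k-1)},\rho^R(g_1(v_{\sigma(k)},\dots,v_{\sigma(k+m-1)}))v_{\sigma(k+m)},v_{k+m+1},\dots,v_{m+n})$. Here $T$ is regarded as an element of $C^1(V,\mathfrak{g})$. *)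

From HB Require Import structures.
From mathcomp Require Import all_boot all_order all_algebra.
From mathcomp Require Import perm.
Set Implicit Arguments. Unset Strict Implicit. Unset Printing Implicit Defensive.
Import GRing.Theory.
Local Open Scope ring_scope.

Section LeibnizDefs.
Variables (K : fieldType) (g V : lmodType K).

Definition is_leibniz (br : g -> g -> g) : Prop :=
  [/\ (forall a x y z, br (a *: x + y) z = a *: br x z + br y z),
      (forall a x y z, br z (a *: x + y) = a *: br z x + br z y) &
      (forall x y z, br x (br y z) = br (br x y) z + br y (br x z))].

Definition is_rep (br : g -> g -> g) (rhoL rhoR : g -> V -> V) : Prop :=
  [/\ (forall a x y v, rhoL (a *: x + y) v = a *: rhoL x v + rhoL y v),
      (forall a x y v, rhoR (a *: x + y) v = a *: rhoR x v + rhoR y v),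
      (forall x a u v, rhoL x (a *: u + v) = a *: rhoL x u + rhoL x v) &
      (forall x a u v, rhoR x (a *: u + v) = a *: rhoR x u + rhoR x v)] /\
  [/\ (forall x y v, rhoL (br x y) v = rhoL x (rhoL y v) - rhoL y (rhoL x v)),
      (forall x y v, rhoR (br x y) v = rhoL x (rhoR y v) - rhoR y (rhoL x v)) &
      (forall x y v, rhoR y (rhoL x v) = - rhoR y (rhoR x v))].

Definition is_relRB (br : g -> g -> g) (rhoL rhoR : g -> V -> V) (T : V -> g)
  : Prop :=
  (forall a u v, T (a *: u + v) = a *: T u + T v) /\
  (forall v1 v2, br (T v1) (T v2) = T (rhoL (T v1) v2 + rhoR (T v2) v1)).

(* n-cochains Hom(⊗^n V, g): maps on lists of length n, linear in each slot. *)
Definition multilinear (n : nat) (f : seq V -> g) : Prop :=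
  forall (s : seq V) (i : nat) (a : K) (x y : V),
    size s = n -> (i < n)%N ->
    f (set_nth 0 s i (a *: x + y)) =
      a *: f (set_nth 0 s i x) + f (set_nth 0 s i y).

Definition cochain1 (T : V -> g) : seq V -> g := fun s => T (nth 0 s 0).

(* 1-based argument access: v_k = nth 0 s (k-1). *)
Definition varg (s : seq V) (k : nat) : V := nth 0 s k.-1.

(* A permutation of 'I_N viewed on 1-based indices (identity outside 1..N). *)
Definition perm1 (N : nat) (σ : 'S_N) (j : nat) : nat :=
  match (insub j.-1 : option 'I_N) with
  | Some i => (val (σ i)).+1
  | None => j
  end.

(* sigma in S_(i_1,...,i_k): increasing on each consecutive block of positions. *)
Definition is_shuffle (l : seq nat) (σ : 'S_(sumn l)) : bool :=
  all (fun b => all (fun j => (perm1 σ j < perm1 σ j.+1)%N)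
                    (iota (sumn (take b l)).+1 (nth 0%N l b).-1))
      (iota 0 (size l)).

(* \sum_{σ ∈ S_(l), Q σ} (-1)^σ F σ, with σ passed as a 1-based index map. *)
Definition shsum (l : seq nat) (Q : (nat -> nat) -> bool)
    (F : (nat -> nat) -> g) : g :=
  \sum_(σ : 'S_(sumn l) | is_shuffle σ && Q (perm1 σ))
     (-1) ^+ odd_perm σ *: F (perm1 σ).

Variables (br : g -> g -> g) (rhoL rhoR : g -> V -> V).

Definition lbracket (m n : nat) (g1 g2 : seq V -> g) (s : seq V) : g :=
  let v := varg s in
  \sum_(1 <= k < m.+1) (-1) ^+ (k.-1 * n + 1)%N *:
     shsum [:: k.-1; n] xpredT (fun σ =>
       g1 ([seq v (σ j) | j <- iota 1 k.-1] ++
           rhoL (g2 [seq v (σ j) | j <- iota k n]) (v (k + n)%N) ::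
           [seq v j | j <- iota (k + n)%N.+1 (m - k)%N]))
  + \sum_(2 <= k < m.+2) (-1) ^+ (k * n)%N *:
     shsum [:: (k - 2)%N; n; 1%N] (fun σ => σ (k + n - 2)%N == (k + n - 1)%N) (fun σ =>
       g1 ([seq v (σ j) | j <- iota 1 (k - 2)%N] ++
           rhoR (g2 [seq v (σ j) | j <- iota k.-1 n]) (v (σ (k + n - 1)%N)) ::
           [seq v j | j <- iota (k + n)%N (m + 1 - k)%N]))
  + \sum_(1 <= k < m.+1) (-1) ^+ (k.-1 * n)%N *:
     shsum [:: k.-1; n.-1] xpredT (fun σ =>
       br (g2 ([seq v (σ j) | j <- iota k n.-1] ++ [:: v (k + n - 1)%N]))
          (g1 ([seq v (σ j) | j <- iota 1 k.-1] ++
               [seq v j | j <- iota (k + n)%N (m - k)%N.+1])))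
  + (-1) ^+ (m * n + 1)%N *:
     shsum [:: m; n.-1] xpredT (fun σ =>
       br (g1 [seq v (σ j) | j <- iota 1 m])
          (g2 ([seq v (σ j) | j <- iota m.+1 n.-1] ++ [:: v (m + n)%N])))
  + \sum_(1 <= k < n.+1) (-1) ^+ (m * (k + n - 1))%N *:
     shsum [:: k.-1; m] xpredT (fun σ =>
       g2 ([seq v (σ j) | j <- iota 1 k.-1] ++
           rhoL (g1 [seq v (σ j) | j <- iota k m]) (v (k + m)%N) ::
           [seq v j | j <- iota (k + m)%N.+1 (n - k)%N]))
  + \sum_(1 <= k < n.+1) (-1) ^+ (m * (k + n - 1) + 1)%N *:
     shsum [:: k.-1; m; 1%N] (fun σ => σ (k + m - 1)%N == (k + m)%N) (fun σ =>
       g2 ([seq v (σ j) | j <- iota 1 k.-1] ++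
           rhoR (g1 [seq v (σ j) | j <- iota k m]) (v (σ (k + m)%N)) ::
           [seq v j | j <- iota (k + m)%N.+1 (n - k)%N])).

Definition dT (T : V -> g) (n : nat) (f : seq V -> g) (s : seq V) : g :=
  let v := varg s in
  let hat i := [seq v j | j <- iota 1 n.+1 & j != i] in
  \sum_(1 <= i < n.+1) (-1) ^+ i.+1 *: br (T (v i)) (f (hat i))
  - \sum_(1 <= i < n.+1) (-1) ^+ i.+1 *: T (rhoR (f (hat i)) (v i))
  + (-1) ^+ n.+1 *: br (f [seq v j | j <- iota 1 n]) (T (v n.+1))
  + (-1) ^+ n *: T (rhoL (f [seq v j | j <- iota 1 n]) (v n.+1))
  + \sum_(1 <= i < n.+2) \sum_(i.+1 <= j < n.+2) (-1) ^+ i *: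
      f ([seq v l | l <- iota 1 j.-1 & l != i] ++
         (rhoL (T (v i)) (v j) + rhoR (T (v j)) (v i)) ::
         [seq v l | l <- iota j.+1 (n.+1 - j)%N]).
End LeibnizDefs.

From mathcomp Require Import all_boot all_order all_algebra perm zify.
Set Implicit Arguments. Unset Strict Implicit. Unset Printing Implicit Defensive.
Import GRing.Theory.
Local Open Scope ring_scope.

(* With m = 1 every shuffle occurring in {T, f} moves at most one argument: the
   (0,n)-shuffles reduce to the identity, the (k-1,1)- and constrained
   (0,n,1)-, (k-1,1,1)-shuffles are the cycles [lift_perm ord_max i 1] that
   insert the last argument at position i, and the (1,n-1)-shuffles are the
   cycles [lift_perm ord0 i 1].  Evaluating the shuffle sums accordingly turns
   each summand of (-1)^(n-1) {T, f} into a summand of ∂_T f, the double sum of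
   ∂_T f being split into its ρ^L- and ρ^R-parts by additivity of f in the
   modified argument. *)

Lemma iotaSr m n : iota m n.+1 = rcons (iota m n) (m + n)%N.
Proof. by rewrite -addn1 iotaD cats1. Qed.

Lemma filter_iota_neq a L i : (a <= i < a + L)%N ->
  [seq j <- iota a L | j != i] = iota a (i - a) ++ iota i.+1 (a + L - i.+1).
Proof.
move=> i_in; rewrite {1}(_ : L = i - a + (a + L - i.+1).+1)%N; last by lia.
rewrite iotaD subnKC /=; last by lia.
rewrite filter_cat /= eqxx; congr (_ ++ _).
all: by apply/all_filterP/allP => j; rewrite mem_iota; lia.
Qed.

Lemma map_iota_succ (X : Type) (w : nat -> X) m n :
  [seq w j.+1 | j <- iota m n] = [seq w j | j <- iota m.+1 n].
Proof. by rewrite (iotaDl 1) -map_comp. Qed.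

Lemma perm1E N (σ : 'S_N) (i : 'I_N) : perm1 σ i.+1 = (σ i).+1.
Proof.
rewrite /perm1 /= (insubT (fun j => (j < N)%N) (ltn_ord i)) /=.
by congr (val (σ _)).+1; apply: val_inj.
Qed.

Lemma perm1_id N j : (0 < j)%N -> perm1 (1%g : 'S_N) j = j.
Proof.
move=> j_gt0; rewrite /perm1; case: insubP => //= i _ eq_ij.
by rewrite perm.perm1 eq_ij prednK.
Qed.

Lemma perm_incr_uniq N (B : {pred 'I_N}) (σ τ : 'S_N) :
    {in [predC B], σ =1 τ} ->
    {in B &, {homo σ : i j / (i < j)%N}} -> {in B &, {homo τ : i j / (i < j)%N}} ->
  σ = τ.
Proof.
have no_lt (s t : 'S_N) (i : 'I_N) :
    {in [predC B], s =1 t} -> {in B &, {homo t : i j / (i < j)%N}} ->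
    (forall j : 'I_N, (j < i)%N -> s j = t j) -> ~~ (s i < t i)%N.
  move=> eq_st t_incr eq_lt; apply/negP => lt_st.
  have [j tj] : {j | t j = s i} by exists (t^-1 (s i))%g; rewrite permKV.
  have Bi : i \in B by apply: contraLR lt_st => /eq_st ->; rewrite ltnn.
  case: (ltngtP j i) => [lt_ji | lt_ij | /val_inj eq_ji].
  - have /perm_inj eq_ji : s j = s i by rewrite eq_lt.
    by move: lt_ji; rewrite eq_ji ltnn.
  - have Bj : j \in B.
      apply: contraT => /eq_st; rewrite tj => /perm_inj eq_ji.
      by move: lt_ij; rewrite eq_ji ltnn.
    by have := ltn_trans lt_st (t_incr _ _ Bi Bj lt_ij); rewrite tj ltnn.
  - by move: lt_st; rewrite -tj eq_ji ltnn.
move=> eq_στ σ_incr τ_incr; apply/permP.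
suff eq_lt k (i : 'I_N) : (i < k)%N -> σ i = τ i by move=> i; apply: (eq_lt i.+1).
elim: k i => // k IHk i; rewrite ltnS => le_ik.
have IHi (j : 'I_N) : (j < i)%N -> σ j = τ j.
  by move=> lt_ji; apply: IHk; apply: leq_trans lt_ji le_ik.
have στ_ge := no_lt σ τ i eq_στ τ_incr IHi.
have τσ_ge := no_lt τ σ i (fun x Bx => esym (eq_στ x Bx)) σ_incr
  (fun j lt_ji => esym (IHi j lt_ji)).
by apply: val_inj; apply/eqP; rewrite eqn_leq leqNgt τσ_ge leqNgt στ_ge.
Qed.

(* [perm1 σ] is increasing on the consecutive pairs (j, j+1), a <= j < a + L,
   of 1-based positions: this is the block condition of [is_shuffle]. *)
Definition incr_on N (σ : 'S_N) a L :=
  all (fun j => perm1 σ j < perm1 σ j.+1)%N (iota a L).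

Lemma incr_on_homo N (σ : 'S_N) a L : (0 < a)%N -> incr_on σ a L ->
  {in [pred i : 'I_N | a <= i.+1 <= a + L]%N &, {homo σ : i j / (i < j)%N}}.
Proof.
move=> a_gt0 /allP σ_incr i j; rewrite !inE => Bi Bj lt_ij; rewrite -ltnS -!perm1E.
apply: (@homo_ltn_in nat [pred k | a <= k <= a + L]%N _ (fun m n => m < n)%N ltn_trans)
  => //= [k l|k]; rewrite !inE => Bk Bl; first by move=> m; rewrite !inE; lia.
by apply: σ_incr; rewrite mem_iota; lia.
Qed.

Lemma incr_on1 N a L : (0 < a)%N -> incr_on (1%g : 'S_N) a L.
Proof. by move=> a_gt0; apply/allP => j; rewrite mem_iota => j_in; rewrite !perm1_id; lia. Qed.

Lemma incr_on_id N (σ : 'S_N) : incr_on σ 1 N.-1 -> σ = 1%g.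
Proof.
move=> σ_incr.
apply: perm_incr_uniq (incr_on_homo _ σ_incr) (incr_on_homo _ (incr_on1 _ _ _)) => //.
by move=> i; rewrite !inE; have := ltn_ord i; lia.
Qed.

Lemma incr_on_max M (σ : 'S_M.+2) :
  perm1 σ M.+1 = M.+2 -> incr_on σ 1 M = incr_on σ 1 M.-1.
Proof.
case: M σ => // M σ σ_max; rewrite /incr_on iotaSr all_rcons add1n σ_max.
have σM : perm1 σ M.+1 = (σ (inord M)).+1 by rewrite -perm1E inordK //; lia.
have σM1 : σ (inord M.+1) = M.+2 :> nat.
  have := perm1E σ (inord M.+1); rewrite inordK; last by lia.
  by rewrite σ_max => /succn_inj.
have σM_neq : σ (inord M) != σ (inord M.+1) :> nat.
  by rewrite val_eqE (inj_eq perm_inj) -val_eqE /= !inordK; lia.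
rewrite σM1 in σM_neq.
have σM_lt : ((σ (inord M)).+1 < M.+3)%N by have := ltn_ord (σ (inord M)); lia.
by rewrite σM σM_lt.
Qed.

Section Insertions.
Variable M : nat.
Implicit Type i : 'I_M.+1.

Definition ins_last i : 'S_M.+1 := lift_perm ord_max i 1.
Definition ins_first i : 'S_M.+1 := lift_perm ord0 i 1.

Lemma perm1_ins_last_max i : perm1 (ins_last i) M.+1 = i.+1.
Proof. by rewrite (perm1E _ ord_max) lift_perm_id. Qed.

Lemma perm1_ins_last i j : (0 < j <= M)%N ->
  perm1 (ins_last i) j = if (j <= i)%N then j else j.+1.
Proof.
move=> j_in; have lt_jM : (j.-1 < M)%N by lia.
have -> : j = (lift ord_max (Ordinal lt_jM)).+1 by rewrite /= /bump; lia.
rewrite perm1E lift_perm_lift perm.perm1 /= /bump; case: leqP; case: leqP; lia.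
Qed.

Lemma perm1_ins_first_1 i : perm1 (ins_first i) 1 = i.+1.
Proof. by rewrite (perm1E _ ord0) lift_perm_id. Qed.

Lemma perm1_ins_first i j : (1 < j <= M.+1)%N ->
  perm1 (ins_first i) j = if (j <= i.+1)%N then j.-1 else j.
Proof.
move=> j_in; have lt_jM : (j.-2 < M)%N by lia.
have -> : j = (lift ord0 (Ordinal lt_jM)).+1 by rewrite /= /bump; lia.
rewrite perm1E lift_perm_lift perm.perm1 /= /bump; case: leqP; case: leqP; lia.
Qed.

Lemma sign_ins_last (R : pzRingType) i :
  (-1) ^+ odd_perm (ins_last i) = (-1) ^+ (M + i) :> R.
Proof. by rewrite odd_lift_perm odd_perm1 addbF signr_addb !signr_odd exprD. Qed.

Lemma sign_ins_first (R : pzRingType) i :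
  (-1) ^+ odd_perm (ins_first i) = (-1) ^+ i :> R.
Proof. by rewrite odd_lift_perm odd_perm1 addbF /= signr_odd. Qed.

Lemma incr_on_ins_last i : incr_on (ins_last i) 1 M.-1.
Proof.
apply/allP => j; rewrite mem_iota => j_in.
by rewrite !perm1_ins_last; [case: (leqP j i); case: (leqP j.+1 i) | ..]; lia.
Qed.

Lemma incr_on_ins_first i : incr_on (ins_first i) 2 M.-1.
Proof.
apply/allP => j; rewrite mem_iota => j_in.
by rewrite !perm1_ins_first; [case: (leqP j i.+1); case: (leqP j.+1 i.+1) | ..]; lia.
Qed.

Lemma incr_on_ins_lastP (σ : 'S_M.+1) : incr_on σ 1 M.-1 -> σ = ins_last (σ ord_max).
Proof.
move=> σ_incr.
apply: perm_incr_uniq (incr_on_homo _ σ_incr) (incr_on_homo _ (incr_on_ins_last _)) => // i.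
rewrite !inE => i_out; have -> : i = ord_max.
  by apply: val_inj; have := ltn_ord i; rewrite /=; lia.
by rewrite lift_perm_id.
Qed.

Lemma incr_on_ins_firstP (σ : 'S_M.+1) : incr_on σ 2 M.-1 -> σ = ins_first (σ ord0).
Proof.
move=> σ_incr.
apply: perm_incr_uniq (incr_on_homo _ σ_incr) (incr_on_homo _ (incr_on_ins_first _)) => // i.
rewrite !inE => i_out; have -> : i = ord0.
  by apply: val_inj; have := ltn_ord i; rewrite /=; lia.
by rewrite lift_perm_id.
Qed.

Variables (X : Type) (w : nat -> X).

Lemma map_perm1_ins_last i L : (i <= L <= M)%N ->
  [seq w (perm1 (ins_last i) j) | j <- iota 1 L] = [seq w j | j <- iota 1 L.+1 & j != i.+1].
Proof.
move=> i_le; rewrite filter_iota_neq; last by lia.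
rewrite -{1}(@subnKC i L) ?iotaD ?map_cat; last by lia.
rewrite add1n !subSS subn0 -(map_iota_succ w i.+1); congr (_ ++ _); apply/eq_in_map => j.
all: rewrite mem_iota => j_in; rewrite perm1_ins_last; [case: leqP => //; lia | lia].
Qed.

Lemma map_perm1_ins_first i L : (i <= L <= M)%N ->
  [seq w (perm1 (ins_first i) j) | j <- iota 2 L] = [seq w j | j <- iota 1 L.+1 & j != i.+1].
Proof.
move=> i_le; rewrite filter_iota_neq; last by lia.
rewrite -{1}(@subnKC i L) ?iotaD ?map_cat; last by lia.
rewrite add1n !subSS subn0 (iotaDl 1 1) -map_comp; congr (_ ++ _); apply/eq_in_map => j.
all: rewrite mem_iota => j_in /=; rewrite ?add1n perm1_ins_first; [case: leqP => //; lia | lia].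
Qed.
End Insertions.

Lemma map_perm1_id (X : Type) (w : nat -> X) N a L : (0 < a)%N ->
  [seq w (perm1 (1%g : 'S_N) j) | j <- iota a L] = [seq w j | j <- iota a L].
Proof.
by move=> a_gt0; apply/eq_in_map => j; rewrite mem_iota => j_in; rewrite perm1_id //; lia.
Qed.

Section ShuffleSums.
Variables (K : fieldType) (g : lmodType K).
Implicit Types (Q : (nat -> nat) -> bool) (F : (nat -> nat) -> g).

Lemma sum_incr_on_id N Q F : Q (perm1 (1%g : 'S_N)) ->
  \sum_(σ : 'S_N | incr_on σ 1 N.-1 && Q (perm1 σ)) (-1) ^+ odd_perm σ *: F (perm1 σ) =
  F (perm1 (1%g : 'S_N)).
Proof.
move=> Q1; rewrite (big_pred1 (1%g : 'S_N)) ?odd_perm1 ?scale1r // => σ.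
by apply/andP/eqP => [[/incr_on_id] | ->] //; rewrite incr_on1.
Qed.

Lemma sum_incr_on_last M Q F :
  \sum_(σ : 'S_M.+1 | incr_on σ 1 M.-1 && Q (perm1 σ)) (-1) ^+ odd_perm σ *: F (perm1 σ) =
  \sum_(i < M.+1 | Q (perm1 (ins_last i))) (-1) ^+ (M + i) *: F (perm1 (ins_last i)).
Proof.
rewrite (reindex_onto (@ins_last M) (fun σ => σ ord_max)) => [|σ]; last first.
  by case/andP => /incr_on_ins_lastP.
apply: eq_big => [i | i _]; last by rewrite sign_ins_last.
by rewrite incr_on_ins_last lift_perm_id eqxx andbT.
Qed.

Lemma sum_incr_on_first M Q F :
  \sum_(σ : 'S_M.+1 | incr_on σ 2 M.-1 && Q (perm1 σ)) (-1) ^+ odd_perm σ *: F (perm1 σ) =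
  \sum_(i < M.+1 | Q (perm1 (ins_first i))) (-1) ^+ i *: F (perm1 (ins_first i)).
Proof.
rewrite (reindex_onto (@ins_first M) (fun σ => σ ord0)) => [|σ]; last first.
  by case/andP => /incr_on_ins_firstP.
apply: eq_big => [i | i _]; last by rewrite sign_ins_first.
by rewrite incr_on_ins_first lift_perm_id eqxx andbT.
Qed.

Lemma sum_ins_last_lt M (G : 'I_M.+1 -> g) : (0 < M)%N ->
  \sum_(i < M.+1 | perm1 (ins_last i) M == M.+1) G i =
  \sum_(i < M) G (widen_ord (leqnSn M) i).
Proof.
move=> M_gt0; rewrite -big_ord_narrow; apply: eq_bigl => i.
by rewrite perm1_ins_last ?leqnn ?M_gt0 //; case: leqP => _; lia.
Qed.

(* [is_shuffle] with the degree decoupled from [sumn l], so that [sumn l] can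
   be rewritten to the numeral it denotes. *)
Definition shuffleb (l : seq nat) N (σ : 'S_N) : bool :=
  all (fun b => all (fun j => (perm1 σ j < perm1 σ j.+1)%N)
                    (iota (sumn (take b l)).+1 (nth 0%N l b).-1))
      (iota 0 (size l)).

Lemma shsumE l N a L Q F : sumn l = N ->
    (forall σ : 'S_N, shuffleb l σ = incr_on σ a L) ->
  shsum l Q F =
  \sum_(σ : 'S_N | incr_on σ a L && Q (perm1 σ)) (-1) ^+ odd_perm σ *: F (perm1 σ).
Proof. by move=> <- shuffleE; apply: eq_bigl => σ; rewrite -shuffleE. Qed.

Lemma shsum_0n n F : shsum [:: 0; n]%N xpredT F = F (perm1 (1%g : 'S_n)).
Proof.
rewrite (@shsumE _ n 1 n.-1) ?(sum_incr_on_id (Q := xpredT)) //= ?addn0 // => σ.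
by rewrite /shuffleb /= andbT.
Qed.

Lemma shsum_n1 M F : shsum [:: M; 1]%N xpredT F =
  \sum_(i < M.+1) (-1) ^+ (M + i) *: F (perm1 (ins_last i)).
Proof.
rewrite (@shsumE _ M.+1 1 M.-1) ?(sum_incr_on_last _ xpredT) //= ?addn1 // => σ.
by rewrite /shuffleb /= andbT.
Qed.

Lemma shsum_1n M F : shsum [:: 1; M]%N xpredT F =
  \sum_(i < M.+1) (-1) ^+ i *: F (perm1 (ins_first i)).
Proof.
rewrite (@shsumE _ M.+1 2 M.-1) ?(sum_incr_on_first _ xpredT) //= ?addn0 // => σ.
by rewrite /shuffleb /= andbT.
Qed.

Lemma shsum_0n1 n F : (0 < n)%N ->
  shsum [:: 0; n; 1]%N (fun σ => σ n == n.+1) F =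
  \sum_(i < n) (-1) ^+ (n + i) *: F (perm1 (ins_last (widen_ord (leqnSn n) i))).
Proof.
move=> n_gt0; rewrite (@shsumE _ n.+1 1 n.-1) => [|/=|σ]; last 2 first.
- by rewrite addn1.
- by rewrite /shuffleb /= andbT.
by rewrite (sum_incr_on_last _ (fun τ => τ n == n.+1)) sum_ins_last_lt.
Qed.

Lemma shsum_n11 M F :
  shsum [:: M; 1; 1]%N (fun σ => σ M.+1 == M.+2) F =
  \sum_(i < M.+1) (-1) ^+ (M.+1 + i) *: F (perm1 (ins_last (widen_ord (leqnSn M.+1) i))).
Proof.
rewrite (@shsumE _ M.+2 1 M.-1) => [|/=|σ]; last 2 first.
- by rewrite addn2.
- by rewrite /shuffleb /= andbT.
rewrite (eq_bigl (fun σ => incr_on σ 1 M && (perm1 σ M.+1 == M.+2))) => [|σ].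
  by rewrite (sum_incr_on_last _ (fun τ => τ M.+1 == M.+2)) sum_ins_last_lt.
by case: eqP => [/incr_on_max ->|]; rewrite ?andbF.
Qed.
End ShuffleSums.

Lemma big_nat_triangle (R : nmodType) (G : nat -> nat -> R) a b :
  \sum_(a <= i < b) \sum_(i.+1 <= j < b) G i j = \sum_(a <= j < b) \sum_(a <= i < j) G i j.
Proof.
elim: b => [|b IHb]; first by rewrite !big_geq.
have [le_ab | lt_ba] := leqP a b; last by rewrite !big_geq.
rewrite big_nat_recr // [in RHS]big_nat_recr //= [X in _ + X]big_geq // addr0 -IHb.
by rewrite -big_split; apply: eq_big_nat => i /andP[le_ai lt_ib]; rewrite big_nat_recr.
Qed.

Lemma big_nat_pairs (R : nmodType) (G : nat -> nat -> R) n :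
  \sum_(1 <= i < n.+2) \sum_(i.+1 <= j < n.+2) G i j =
  \sum_(1 <= k < n.+1) \sum_(i < k) G i.+1 k.+1.
Proof.
rewrite big_nat_triangle big_nat_recl // [X in X + _]big_geq // add0r.
by apply: eq_big_nat => k _; rewrite big_add1 big_mkord.
Qed.

Lemma signr_eq_odd (R : pzRingType) a b : odd a = odd b -> (-1) ^+ a = (-1) ^+ b :> R.
Proof. by move=> odd_ab; rewrite -signr_odd odd_ab signr_odd. Qed.

Lemma cochain1_cons (K : fieldType) (g V : lmodType K) (T : V -> g) x s :
  cochain1 T (x :: s) = T x.
Proof. by []. Qed.

Lemma multilinearD (K : fieldType) (g V : lmodType K) n (F : seq V -> g) ls rs x y :
    multilinear n F -> (size ls + (size rs).+1)%N = n ->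
  F (ls ++ (x + y) :: rs) = F (ls ++ x :: rs) + F (ls ++ y :: rs).
Proof.
move=> F_lin size_n.
have set_slot z : ls ++ z :: rs = set_nth 0 (ls ++ 0 :: rs) (size ls) z.
  by elim: ls {size_n} => //= l ls ->.
rewrite (set_slot (x + y)) (set_slot x) (set_slot y).
by rewrite -[x]scale1r F_lin ?scale1r ?size_cat //; lia.
Qed.

Section BracketTerms.
Variables (K : fieldType) (g V : lmodType K).
Variables (br : g -> g -> g) (rhoL rhoR : g -> V -> V) (T : V -> g) (f : seq V -> g).
Variable v : nat -> V.

(* The right-hand sides are summands of [lbracket _ _ _ 1 n (cochain1 T) f]
   exactly as they unfold, hence unsimplified arithmetic such as [1.-1]. *)

Lemma bracket_T_rhoL n : (0 < n)%N ->
  (-1) ^+ n *: T (rhoL (f [seq v j | j <- iota 1 n]) (v n.+1)) =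
  (-1) ^+ n.-1 *: ((-1) ^+ (1.-1 * n + 1) *: shsum [:: 1.-1; n] xpredT (fun σ =>
     cochain1 T ([seq v (σ j) | j <- iota 1 1.-1] ++
       rhoL (f [seq v (σ j) | j <- iota 1 n]) (v (1 + n)%N) ::
       [seq v j | j <- iota (1 + n).+1 (1 - 1)]))).
Proof.
move=> n_gt0; rewrite shsum_0n /cochain1 /= map_perm1_id // scalerA -exprD.
by congr (_ *: _); apply: signr_eq_odd; lia.
Qed.

Lemma bracket_T_rhoR n : (0 < n)%N ->
  - \sum_(1 <= i < n.+1)
      (-1) ^+ i.+1 *: T (rhoR (f [seq v j | j <- iota 1 n.+1 & j != i]) (v i)) =
  (-1) ^+ n.-1 *: ((-1) ^+ (2 * n) *:
    shsum [:: (2 - 2)%N; n; 1%N] (fun σ => σ (2 + n - 2)%N == (2 + n - 1)%N) (fun σ =>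
      cochain1 T ([seq v (σ j) | j <- iota 1 (2 - 2)] ++
        rhoR (f [seq v (σ j) | j <- iota 2.-1 n]) (v (σ (2 + n - 1)%N)) ::
        [seq v j | j <- iota (2 + n) (1 + 1 - 2)]))).
Proof.
move=> n_gt0; rewrite (_ : 2 + n - 2 = n)%N; last by lia.
rewrite (_ : 2 + n - 1 = n.+1)%N; last by lia.
rewrite shsum_0n1 // /cochain1 [in RHS]/= big_add1 succnK big_mkord -sumrN !scaler_sumr.
apply: eq_bigr => i _; rewrite -scaleNr -mulN1r -exprS !scalerA -!exprD.
congr (_ *: _); first by apply: signr_eq_odd; lia.
by rewrite perm1_ins_last_max map_perm1_ins_last //=; have := ltn_ord i; lia.
Qed.

Lemma bracket_br_f_T n : (0 < n)%N ->
  (-1) ^+ n.+1 *: br (f [seq v j | j <- iota 1 n]) (T (v n.+1)) =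
  (-1) ^+ n.-1 *: ((-1) ^+ (1.-1 * n) *: shsum [:: 1.-1; n.-1] xpredT (fun σ =>
     br (f ([seq v (σ j) | j <- iota 1 n.-1] ++ [:: v (1 + n - 1)%N]))
        (cochain1 T ([seq v (σ j) | j <- iota 1 1.-1] ++
                     [seq v j | j <- iota (1 + n) (1 - 1).+1])))).
Proof.
case: n => // n _; rewrite shsum_0n /cochain1 [in RHS]/= map_perm1_id // addKn.
rewrite iotaSr map_rcons cats1 add1n scalerA -exprD.
by congr (_ *: _); apply: signr_eq_odd; lia.
Qed.

Lemma bracket_br_T_f n : (0 < n)%N ->
  \sum_(1 <= i < n.+1)
      (-1) ^+ i.+1 *: br (T (v i)) (f [seq v j | j <- iota 1 n.+1 & j != i]) =
  (-1) ^+ n.-1 *: ((-1) ^+ (1 * n + 1) *: shsum [:: 1%N; n.-1] xpredT (fun σ =>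
     br (cochain1 T [seq v (σ j) | j <- iota 1 1])
        (f ([seq v (σ j) | j <- iota 2 n.-1] ++ [:: v (1 + n)%N])))).
Proof.
case: n => // n _; rewrite shsum_1n /cochain1 [in RHS]/= big_add1 succnK big_mkord.
rewrite !scaler_sumr; apply: eq_bigr => i _; rewrite !scalerA -!exprD.
congr (_ *: _); first by apply: signr_eq_odd; lia.
have lt_in := ltn_ord i; rewrite perm1_ins_first_1 map_perm1_ins_first; last by lia.
by rewrite [in LHS]iotaSr filter_rcons add1n ifT ?map_rcons ?cats1 //; lia.
Qed.

Lemma bracket_f_rhoL_T n :
  \sum_(1 <= i < n.+2) \sum_(i.+1 <= j < n.+2) (-1) ^+ i *:
     f ([seq v l | l <- iota 1 j.-1 & l != i] ++ rhoL (T (v i)) (v j) ::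
        [seq v l | l <- iota j.+1 (n.+1 - j)]) =
  (-1) ^+ n.-1 *: \sum_(1 <= k < n.+1) (-1) ^+ (1 * (k + n - 1)) *:
     shsum [:: k.-1; 1%N] xpredT (fun σ =>
       f ([seq v (σ j) | j <- iota 1 k.-1] ++
          rhoL (cochain1 T [seq v (σ j) | j <- iota k 1]) (v (k + 1)%N) ::
          [seq v j | j <- iota (k + 1).+1 (n - k)])).
Proof.
rewrite big_nat_pairs scaler_sumr; apply: eq_big_nat => -[//|k] /andP[_ lt_kn].
rewrite shsum_n1 !scaler_sumr; apply: eq_bigr => i _; rewrite !scalerA -!exprD.
congr (_ *: _); first by apply: signr_eq_odd => /=; lia.
rewrite cochain1_cons perm1_ins_last_max map_perm1_ins_last ?addn1 ?subSS //.
by have := ltn_ord i; rewrite /=; lia.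
Qed.

Lemma bracket_f_rhoR_T n :
  \sum_(1 <= i < n.+2) \sum_(i.+1 <= j < n.+2) (-1) ^+ i *:
     f ([seq v l | l <- iota 1 j.-1 & l != i] ++ rhoR (T (v j)) (v i) ::
        [seq v l | l <- iota j.+1 (n.+1 - j)]) =
  (-1) ^+ n.-1 *: \sum_(1 <= k < n.+1) (-1) ^+ (1 * (k + n - 1) + 1) *:
     shsum [:: k.-1; 1%N; 1%N] (fun σ => σ (k + 1 - 1)%N == (k + 1)%N) (fun σ =>
       f ([seq v (σ j) | j <- iota 1 k.-1] ++
          rhoR (cochain1 T [seq v (σ j) | j <- iota k 1]) (v (σ (k + 1)%N)) ::
          [seq v j | j <- iota (k + 1).+1 (n - k)])).
Proof.
rewrite big_nat_pairs scaler_sumr; apply: eq_big_nat => -[//|k] /andP[_ lt_kn].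
rewrite addnK !addn1 shsum_n11 !scaler_sumr; apply: eq_bigr => i _; rewrite !scalerA -!exprD.
congr (_ *: _); first by apply: signr_eq_odd => /=; lia.
have lt_ik := ltn_ord i; rewrite cochain1_cons perm1_ins_last_max perm1_ins_last.
  by rewrite ifF ?map_perm1_ins_last ?subSS //=; lia.
by rewrite /=; lia.
Qed.

Lemma dT_pairs_split n : multilinear n f ->
  \sum_(1 <= i < n.+2) \sum_(i.+1 <= j < n.+2) (-1) ^+ i *:
     f ([seq v l | l <- iota 1 j.-1 & l != i] ++
        (rhoL (T (v i)) (v j) + rhoR (T (v j)) (v i)) ::
        [seq v l | l <- iota j.+1 (n.+1 - j)]) =
  \sum_(1 <= i < n.+2) \sum_(i.+1 <= j < n.+2) (-1) ^+ i *:
     f ([seq v l | l <- iota 1 j.-1 & l != i] ++ rhoL (T (v i)) (v j) ::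
        [seq v l | l <- iota j.+1 (n.+1 - j)]) +
  \sum_(1 <= i < n.+2) \sum_(i.+1 <= j < n.+2) (-1) ^+ i *:
     f ([seq v l | l <- iota 1 j.-1 & l != i] ++ rhoR (T (v j)) (v i) ::
        [seq v l | l <- iota j.+1 (n.+1 - j)]).
Proof.
move=> f_lin; rewrite -big_split; apply: eq_big_nat => i /andP[i_gt0 _].
rewrite -big_split; apply: eq_big_nat => j /andP[lt_ij lt_jn] /=.
rewrite -scalerDr (multilinearD _ _ f_lin) // size_map filter_iota_neq; last by lia.
by rewrite size_cat !size_map !size_iota; lia.
Qed.
End BracketTerms.

Theorem theorem2p10 (K : fieldType) (g V : lmodType K)
    (br : g -> g -> g) (rhoL rhoR : g -> V -> V) (T : V -> g) :
  is_leibniz br ->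
  is_rep br rhoL rhoR ->
  is_relRB br rhoL rhoR T ->
  forall (n : nat) (f : seq V -> g), (1 <= n)%N -> multilinear n f ->
  forall s : seq V, size s = n.+1 ->
    dT br rhoL rhoR T n f s =
      (-1) ^+ n.-1 *: lbracket br rhoL rhoR 1 n (cochain1 T) f s.
Proof.
move=> _ _ _ n f n_gt0 f_lin s _.
rewrite /dT /lbracket !big_nat1 !scalerDr; set v := varg s.
rewrite (dT_pairs_split rhoL rhoR T v f_lin) (bracket_br_T_f br T f v n_gt0).
rewrite (bracket_T_rhoR rhoR T f v n_gt0) (bracket_br_f_T br T f v n_gt0).
rewrite (bracket_T_rhoL rhoL T f v n_gt0).
rewrite (bracket_f_rhoL_T rhoL T f v n) (bracket_f_rhoR_T rhoR T f v n).
by rewrite addrA [LHS](ACl (4*2*3*1*5*6)).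
Qed.
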